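(* Let $\mathcal{P}=\{X_i\mid i\in I\}$ be a partition of a set $X$, and let $f\in\Sigma(X,\mathcal{P})$. If $f$ is an idempotent, then $\chi^{(f)}$ is the identity map on $I$.
   Context: Maps are written on the right and composed left to right. $T(X,\mathcal{P})=\{f\colon X\to X\mid \forall i\ \exists j:\ X_if\subseteq X_j\}$ (distinct indices for distinct blocks) and $\Sigma(X,\mathcal{P})=\{f\in T(X,\mathcal{P})\mid Xf\cap X_i\neq\emptyset\ \forall i\in I\}$. For $f\in T(X,\mathcal{P})$, $\chi^{(f)}\colon I\to I$ is defined by $i\chi^{(f)}=j$ whenever $X_if\subseteq X_j$. *)

(* sets as predicates on types, maps written as ordinary functions
   (the paper's right-action x f is rendered as f x). *)
From Stdlib Require Import ClassicalEpsilon.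

Definition is_partition {X I : Type} (P : I -> X -> Prop) : Prop :=
  (forall i, exists x, P i x) /\
  (forall i j x, P i x -> P j x -> i = j) /\
  (forall x, exists i, P i x) /\
  (forall i j, (forall x, P i x <-> P j x) -> i = j).

Definition in_T {X I : Type} (P : I -> X -> Prop) (f : X -> X) : Prop :=
  forall i, exists j, forall x, P i x -> P j (f x).

Definition in_Sigma {X I : Type} (P : I -> X -> Prop) (f : X -> X) : Prop :=
  in_T P f /\ forall i, exists x, P i (f x).

(* chi^(f) : i |-> the j with X_i f ⊆ X_j (unique for a partition, f in T) *)
Definition chi {X I : Type} (P : I -> X -> Prop) (f : X -> X) (i : I) : I :=
  epsilon (inhabits i) (fun j => forall x, P i x -> P j (f x)).

Definition idempotent {X : Type} (f : X -> X) : Prop := forall x, f (f x) = f x.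

(* Since f meets every block, some f x lies in X_i; idempotence makes f x a
   fixed point, so X_i f meets X_i, and disjointness of the blocks forces
   the block containing X_i f to be X_i itself. *)
From Stdlib Require Import ClassicalEpsilon.

Section Chi.

Context {X I : Type} {P : I -> X -> Prop} {f : X -> X}.

Lemma chi_spec : in_T P f -> forall i x, P i x -> P (chi P f i) (f x).
Proof. intros HT i; exact (epsilon_spec (inhabits i) _ (HT i)). Qed.

Lemma chi_eq :
  (forall i j x, P i x -> P j x -> i = j) -> in_T P f ->
  forall i j x, P i x -> P j (f x) -> chi P f i = j.
Proof.
  intros Hdisj HT i j x Hx Hfx.
  exact (Hdisj _ _ (f x) (chi_spec HT i x Hx) Hfx).
Qed.

End Chi.

Theorem corollary5p7 (X I : Type) (P : I -> X -> Prop) (f : X -> X) :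
  is_partition P -> in_Sigma P f -> idempotent f ->
  forall i : I, chi P f i = i.
Proof.
  intros [_ [Hdisj _]] [HT Hhit] Hid i.
  destruct (Hhit i) as [x Hx].
  apply (chi_eq Hdisj HT i i (f x)); [exact Hx |].
  rewrite Hid; exact Hx.
Qed.
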